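(* Let $\mathcal{A}$ be an abelian category and $\alpha$ an amplitude on $\mathcal{A}$. Then $\alpha(A)=\mathrm{d}_\alpha(A,0)$ for every $A\in\operatorname{ob}\mathcal{A}$.
   Context: An amplitude on an abelian category $\mathcal{A}$ is a function $\alpha\colon\operatorname{ob}\mathcal{A}\to[0,\infty]$ with $\alpha(0)=0$ such that for every short exact sequence $0\to A\to B\to C\to0$, $\alpha(A)\le\alpha(B)$, $\alpha(C)\le\alpha(B)$ and $\alpha(B)\le\alpha(A)+\alpha(C)$. The cost of a zigzag $A\xleftarrow{\gamma_1}C_1\xrightarrow{\gamma_2}\cdots\xleftarrow{\gamma_{n-1}}C_n\xrightarrow{\gamma_n}B$ is $\sum_i\alpha(\ker\gamma_i)+\alpha(\operatorname{coker}\gamma_i)$; the path metric $\mathrm{d}_\alpha(A,B)$ is the infimum of costs over all zigzags between $A$ and $B$ ($\inf\emptyset=\infty$). *)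

From HB Require Import structures.
From mathcomp Require Import all_boot all_order all_algebra.
From mathcomp Require Import boolp classical_sets reals constructive_ereal ereal.
Set Implicit Arguments. Unset Strict Implicit. Unset Printing Implicit Defensive.
Import Order.TTheory GRing.Theory Num.Theory.
Local Open Scope classical_set_scope.
Local Open Scope ereal_scope.

Record Category := {
  Obj :> Type;
  Hom : Obj -> Obj -> Type;
  comp : forall A B C : Obj, Hom B C -> Hom A B -> Hom A C;
  idm : forall A : Obj, Hom A A;
  comp_assoc : forall A B C D (f : Hom A B) (g : Hom B C) (h : Hom C D),
      comp h (comp g f) = comp (comp h g) f;
  comp_id_l : forall A B (f : Hom A B), comp (idm B) f = f;
  comp_id_r : forall A B (f : Hom A B), comp f (idm A) = f }.

Arguments comp {c A B C}.
Arguments idm {c}.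

Section CatNotions.
Variable C : Category.

Definition is_mono (A B : C) (f : Hom A B) : Prop :=
  forall X (g h : Hom X A), comp f g = comp f h -> g = h.
Definition is_epi (A B : C) (f : Hom A B) : Prop :=
  forall X (g h : Hom B X), comp g f = comp h f -> g = h.

Definition is_zero_obj (Z : C) : Prop :=
  forall X : C, (inhabited (Hom Z X) /\ forall f g : Hom Z X, f = g) /\
                (inhabited (Hom X Z) /\ forall f g : Hom X Z, f = g).

Definition is_zero_mor (A B : C) (f : Hom A B) : Prop :=
  exists Z (u : Hom A Z) (v : Hom Z B), is_zero_obj Z /\ f = comp v u.

Definition is_kernel (A B K : C) (f : Hom A B) (k : Hom K A) : Prop :=
  is_zero_mor (comp f k) /\
  forall X (h : Hom X A), is_zero_mor (comp f h) ->
    exists u : Hom X K, comp k u = h /\ forall u' : Hom X K, comp k u' = h -> u' = u.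

Definition is_cokernel (A B Q : C) (f : Hom A B) (q : Hom B Q) : Prop :=
  is_zero_mor (comp q f) /\
  forall X (h : Hom B X), is_zero_mor (comp h f) ->
    exists u : Hom Q X, comp u q = h /\ forall u' : Hom Q X, comp u' q = h -> u' = u.

Definition is_product (A B P : C) (p1 : Hom P A) (p2 : Hom P B) : Prop :=
  forall X (f : Hom X A) (g : Hom X B),
    exists u : Hom X P, (comp p1 u = f /\ comp p2 u = g) /\
      forall u', comp p1 u' = f -> comp p2 u' = g -> u' = u.

Definition is_coproduct (A B S : C) (i1 : Hom A S) (i2 : Hom B S) : Prop :=
  forall X (f : Hom A X) (g : Hom B X),
    exists u : Hom S X, (comp u i1 = f /\ comp u i2 = g) /\
      forall u', comp u' i1 = f -> comp u' i2 = g -> u' = u.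

End CatNotions.

(* Kernels, cokernels and a zero object are chosen. *)
Record AbelianCategory := {
  cat :> Category;
  zero_obj : cat;
  zero_obj_is_zero : is_zero_obj zero_obj;
  has_products : forall A B : cat,
      exists (P : cat) (p1 : Hom P A) (p2 : Hom P B), is_product p1 p2;
  has_coproducts : forall A B : cat,
      exists (S : cat) (i1 : Hom A S) (i2 : Hom B S), is_coproduct i1 i2;
  ker : forall A B : cat, Hom A B -> cat;
  kerm : forall A B (f : Hom A B), Hom (ker f) A;
  ker_spec : forall A B (f : Hom A B), is_kernel f (kerm f);
  coker : forall A B : cat, Hom A B -> cat;
  cokerm : forall A B (f : Hom A B), Hom B (coker f);
  coker_spec : forall A B (f : Hom A B), is_cokernel f (cokerm f);
  mono_normal : forall A B (f : Hom A B), is_mono f ->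
      exists (D : cat) (g : Hom B D), is_kernel g f;
  epi_normal : forall A B (f : Hom A B), is_epi f ->
      exists (D : cat) (g : Hom D A), is_cokernel g f }.

Arguments ker {a A B}.
Arguments coker {a A B}.

Definition short_exact (Ab : AbelianCategory) (A B D : Ab)
  (f : Hom A B) (g : Hom B D) : Prop :=
  is_kernel g f /\ is_cokernel f g.

Definition amplitude (R : realType) (Ab : AbelianCategory) (alpha : Ab -> \bar R) : Prop :=
  (forall X : Ab, 0 <= alpha X) /\
  alpha (zero_obj Ab) = 0 /\
  forall (A B D : Ab) (f : Hom A B) (g : Hom B D), short_exact f g ->
    [/\ alpha A <= alpha B, alpha D <= alpha B & alpha B <= alpha A + alpha D].

(* ---------- Zigzags ----------
   A zigzag  A <-g1- C1 -g2-> X1 <-g3- C2 -g4-> ... -> B,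
   i.e. a (possibly empty) sequence of spans. *)
Inductive zigzag (Ab : AbelianCategory) : Ab -> Ab -> Type :=
  | zz_nil : forall X : Ab, zigzag X X
  | zz_cons : forall (A Cm X B : Ab), Hom Cm A -> Hom Cm X -> zigzag X B -> zigzag A B.

Definition mor_cost (R : realType) (Ab : AbelianCategory) (alpha : Ab -> \bar R)
  (X Y : Ab) (g : Hom X Y) : \bar R :=
  alpha (ker g) + alpha (coker g).

Fixpoint zz_cost (R : realType) (Ab : AbelianCategory) (alpha : Ab -> \bar R)
  (A B : Ab) (z : zigzag A B) : \bar R :=
  match z with
  | zz_nil _ => 0
  | zz_cons _ _ _ _ g1 g2 r =>
      mor_cost alpha g1 + mor_cost alpha g2 + zz_cost alpha r
  end.

(* Path metric: infimum of costs of zigzags from A to B (inf of empty = +oo). *)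
Definition path_metric (R : realType) (Ab : AbelianCategory) (alpha : Ab -> \bar R)
  (A B : Ab) : \bar R :=
  ereal_inf [set zz_cost alpha z | z in [set: zigzag A B]].

(* Every morphism g : X -> Y gives alpha X <= alpha (ker g) + alpha Y and
   alpha Y <= alpha (coker g) + alpha X: the first comes from the short exact
   sequence ker g -> X -> coim g and the monomorphism coim g -> Y, the second
   is its dual.  Chaining these bounds along a zigzag from A to 0 shows that
   its cost is at least alpha A; conversely the one-span zigzag
   A <- 0 -> 0 costs at most alpha (coker (0 -> A)) <= alpha A. *)
From mathcomp Require Import all_boot all_order all_algebra.
From mathcomp Require Import boolp classical_sets reals constructive_ereal ereal.
Import Order.TTheory.
Local Open Scope ereal_scope.
Set Implicit Arguments.
Unset Strict Implicit.

Section CategoryFacts.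
Variable C : Category.

Lemma zero_mor_postcomp (A B D : C) (f : Hom A B) (g : Hom B D) :
  is_zero_mor f -> is_zero_mor (comp g f).
Proof.
case=> Z [u [v [HZ ->]]]; exists Z, u, (comp g v); split=> //.
by rewrite comp_assoc.
Qed.

Lemma zero_mor_precomp (A B D : C) (f : Hom B D) (g : Hom A B) :
  is_zero_mor f -> is_zero_mor (comp f g).
Proof.
case=> Z [u [v [HZ ->]]]; exists Z, (comp u g), v; split=> //.
by rewrite comp_assoc.
Qed.

Lemma kernel_mono (A B K : C) (f : Hom A B) (k : Hom K A) :
  is_kernel f k -> is_mono k.
Proof.
case=> Hfk Hk X u v Huv.
have Hz : is_zero_mor (comp f (comp k u)).
  by rewrite comp_assoc; apply: zero_mor_precomp.
have [w [_ Hw]] := Hk X (comp k u) Hz.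
by rewrite (Hw u erefl) (Hw v (esym Huv)).
Qed.

Lemma cokernel_epi (A B Q : C) (f : Hom A B) (q : Hom B Q) :
  is_cokernel f q -> is_epi q.
Proof.
case=> Hqf Hq X u v Huv.
have Hz : is_zero_mor (comp (comp u q) f).
  by rewrite -comp_assoc; apply: zero_mor_postcomp.
have [w [_ Hw]] := Hq X (comp u q) Hz.
by rewrite (Hw u erefl) (Hw v (esym Huv)).
Qed.

Lemma kernel_of_cokernel (A B D Q : C) (f : Hom A B) (g : Hom B D) (q : Hom B Q) :
  is_kernel g f -> is_cokernel f q -> is_kernel q f.
Proof.
move=> [Hgf Hk] [Hqf Hq]; split=> // X h Hqh.
have [u [Hu _]] := Hq D g Hgf.
by apply: Hk; rewrite -Hu -comp_assoc; apply: zero_mor_postcomp.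
Qed.

Lemma coproduct_mor_ext (A B S X : C) (i1 : Hom A S) (i2 : Hom B S) (u v : Hom S X) :
  is_coproduct i1 i2 -> comp u i1 = comp v i1 -> comp u i2 = comp v i2 -> u = v.
Proof.
move=> Hcop H1 H2; have [w [_ Hw]] := Hcop X (comp v i1) (comp v i2).
by rewrite (Hw u H1 H2) (Hw v erefl erefl).
Qed.

Lemma retraction_epi (A S : C) (i : Hom A S) (r : Hom S A) :
  comp r i = idm A -> is_epi r.
Proof.
by move=> Hri X u v Huv; rewrite -(comp_id_r u) -(comp_id_r v) -Hri !comp_assoc Huv.
Qed.

End CategoryFacts.

Section AbelianFacts.
Variable Ab : AbelianCategory.

(* The coequalizer of a and b is the cokernel of the kernel of the codiagonal
   V + V -> V, pushed forward along [a, b] : V + V -> I. *)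
Lemma coequalizer_exists (V I : Ab) (a b : Hom V I) :
  exists (E : Ab) (e : Hom I E), [/\ is_epi e, comp e a = comp e b &
    forall Y (m : Hom I Y), comp m a = comp m b -> exists s : Hom E Y, m = comp s e].
Proof.
have [S [j1 [j2 Hcop]]] := has_coproducts V V.
have [ab [[Hab1 Hab2] _]] := Hcop I a b.
have [nabla [[Hn1 Hn2] _]] := Hcop V (idm V) (idm V).
have [D [h Hh]] := epi_normal (retraction_epi Hn1).
have He := coker_spec (comp ab h).
exists (coker (comp ab h)), (cokerm (comp ab h)); split.
- exact: cokernel_epi He.
- have Hz : is_zero_mor (comp (comp (cokerm (comp ab h)) ab) h).
    by rewrite -comp_assoc; apply: He.1.
  have [w [Hw _]] := Hh.2 _ _ Hz.
  by rewrite -Hab1 -Hab2 !comp_assoc -Hw -!comp_assoc Hn1 Hn2.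
- move=> Y m Hmab.
  have Hm : comp m ab = comp (comp m a) nabla.
    apply: (coproduct_mor_ext Hcop); rewrite -!comp_assoc ?Hab1 ?Hab2 ?Hn1 ?Hn2;
      by rewrite comp_id_r.
  have Hz : is_zero_mor (comp m (comp ab h)).
    by rewrite comp_assoc Hm -comp_assoc; apply: zero_mor_postcomp; apply: Hh.1.
  by have [s [Hs _]] := He.2 _ m Hz; exists s.
Qed.

Lemma coimage_retraction (X Y K I E : Ab) (g : Hom X Y) (k : Hom K X) (p : Hom X I)
    (e : Hom I E) (s : Hom E Y) :
  is_kernel g k -> is_cokernel k p -> is_epi e -> comp (comp s e) p = g ->
  exists t : Hom E I, comp t e = idm I.
Proof.
move=> Hk Hp He Hg.
have Hp_epi := cokernel_epi Hp.
have Hep : is_epi (comp e p).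
  by move=> W u v Huv; apply: He; apply: Hp_epi; rewrite -!comp_assoc.
have [D [r Hr]] := epi_normal Hep.
have Hgr : is_zero_mor (comp g r).
  have -> : comp g r = comp s (comp (comp e p) r) by rewrite -Hg !comp_assoc.
  by apply: zero_mor_postcomp; apply: Hr.1.
have [w [Hw _]] := Hk.2 _ r Hgr.
have Hpr : is_zero_mor (comp p r).
  by rewrite -Hw comp_assoc; apply: zero_mor_precomp; apply: Hp.1.
have [t [Ht _]] := Hr.2 _ p Hpr.
by exists t; apply: Hp_epi; rewrite -comp_assoc Ht comp_id_l.
Qed.

Lemma coimage_mono (X Y K I : Ab) (g : Hom X Y) (k : Hom K X) (p : Hom X I)
    (m : Hom I Y) :
  is_kernel g k -> is_cokernel k p -> comp m p = g -> is_mono m.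
Proof.
move=> Hk Hp Hmp V a b Hab.
have [E [e [He Hea Hfactor]]] := coequalizer_exists a b.
have [s Hs] := Hfactor _ m Hab.
have [t Ht] : exists t : Hom E I, comp t e = idm I.
  by apply: (coimage_retraction (s := s) Hk Hp He); rewrite -Hs.
by rewrite -(comp_id_l a) -(comp_id_l b) -Ht -!comp_assoc Hea.
Qed.

Lemma mono_short_exact (A B : Ab) (f : Hom A B) : is_mono f -> short_exact f (cokerm f).
Proof.
move=> /mono_normal [D [g Hg]]; split; last exact: coker_spec.
exact: kernel_of_cokernel Hg (coker_spec f).
Qed.

End AbelianFacts.

Definition op_category (C : Category) : Category.
refine (@Build_Category (Obj C) (fun A B => Hom B A)
  (fun A B D g f => comp f g) (fun A => idm A) _ _ _).
- by move=> A B D E f g h /=; rewrite comp_assoc.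
- by move=> A B f /=; rewrite comp_id_r.
- by move=> A B f /=; rewrite comp_id_l.
Defined.

Section Duality.
Variable C : Category.

Lemma is_zero_obj_op (Z : C) : @is_zero_obj (op_category C) Z <-> is_zero_obj Z.
Proof. by split=> H X; case: (H X) => [[a b] [c d]]. Qed.

Lemma is_zero_mor_op (A B : C) (f : Hom A B) :
  @is_zero_mor (op_category C) B A f <-> is_zero_mor f.
Proof. by split; case=> Z [u [v [/is_zero_obj_op HZ E]]]; exists Z, v, u. Qed.

Lemma is_cokernel_op (A B K : C) (f : Hom A B) (k : Hom K A) :
  @is_cokernel (op_category C) B A K f k <-> is_kernel f k.
Proof.
by split; case=> H1 H2; split=> [|X h /is_zero_mor_op Hh];
  apply/is_zero_mor_op || apply: H2.
Qed.

Lemma is_kernel_op (A B K : C) (f : Hom A B) (q : Hom B K) :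
  @is_kernel (op_category C) B A K f q <-> is_cokernel f q.
Proof.
by split; case=> H1 H2; split=> [|X h /is_zero_mor_op Hh];
  apply/is_zero_mor_op || apply: H2.
Qed.

End Duality.

Definition op_abelian (Ab : AbelianCategory) : AbelianCategory.
refine (@Build_AbelianCategory (op_category Ab) (zero_obj Ab) _ _ _
  (fun A B f => @coker Ab B A f) (fun A B f => @cokerm Ab B A f) _
  (fun A B f => @ker Ab B A f) (fun A B f => @kerm Ab B A f) _ _ _).
- exact/is_zero_obj_op/zero_obj_is_zero.
- by move=> A B; have [S [i1 [i2 H]]] := has_coproducts A B; exists S, i1, i2.
- by move=> A B; have [P [p1 [p2 H]]] := has_products A B; exists P, p1, p2.
- by move=> A B f; apply/is_kernel_op/coker_spec.
- by move=> A B f; apply/is_cokernel_op/ker_spec.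
- move=> A B f /epi_normal [D [g Hg]].
  by exists D, g; apply/is_kernel_op.
- move=> A B f /mono_normal [D [g Hg]].
  by exists D, g; apply/is_cokernel_op.
Defined.

Lemma amplitude_op (R : realType) (Ab : AbelianCategory) (alpha : Ab -> \bar R) :
  amplitude alpha -> @amplitude R (op_abelian Ab) alpha.
Proof.
case=> alpha_ge0 [alpha0 Hses]; split=> //; split=> // A B D f g [Hk Hc].
have [HBA HBD HB] := Hses _ _ _ _ _ (conj (proj1 (is_cokernel_op _ _) Hc)
                                          (proj1 (is_kernel_op _ _) Hk)).
by split=> //; rewrite addeC.
Qed.

Section AmplitudeBounds.
Variables (R : realType) (Ab : AbelianCategory) (alpha : Ab -> \bar R).
Hypothesis alpha_amp : amplitude alpha.

Lemma amplitude_mono_le (A B : Ab) (f : Hom A B) : is_mono f -> alpha A <= alpha B.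
Proof.
by move=> /mono_short_exact Hses; have [] := alpha_amp.2.2 _ _ _ _ _ Hses.
Qed.

Lemma amplitude_ker_le (A B : Ab) (f : Hom A B) : alpha (ker f) <= alpha A.
Proof. exact/amplitude_mono_le/kernel_mono/ker_spec. Qed.

Lemma amplitude_le_kerD (X Y : Ab) (g : Hom X Y) : alpha X <= alpha (ker g) + alpha Y.
Proof.
have Hses := mono_short_exact (kernel_mono (ker_spec g)).
have [_ _ HX] := alpha_amp.2.2 _ _ _ _ _ Hses.
have [m [Hm _]] := (coker_spec (kerm g)).2 _ g (ker_spec g).1.
have Hmono := coimage_mono (ker_spec g) (coker_spec (kerm g)) Hm.
exact: le_trans HX (leeD2l _ (amplitude_mono_le Hmono)).
Qed.

End AmplitudeBounds.

Section AmplitudeCostBounds.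
Variables (R : realType) (Ab : AbelianCategory) (alpha : Ab -> \bar R).
Hypothesis alpha_amp : amplitude alpha.

Lemma amplitude_coker_le (A B : Ab) (f : Hom A B) : alpha (coker f) <= alpha B.
Proof. exact: (amplitude_ker_le (amplitude_op alpha_amp) (f : @Hom (op_abelian Ab) B A)). Qed.

Lemma amplitude_le_cokerD (X Y : Ab) (g : Hom X Y) :
  alpha Y <= alpha (coker g) + alpha X.
Proof. exact: (amplitude_le_kerD (amplitude_op alpha_amp) (g : @Hom (op_abelian Ab) Y X)). Qed.

Lemma amplitude_le_mor_cost_src (X Y : Ab) (g : Hom X Y) :
  alpha X <= mor_cost alpha g + alpha Y.
Proof.
apply: (le_trans (amplitude_le_kerD alpha_amp g)).
by apply: leeD2r; apply: leeDl; apply: alpha_amp.1.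
Qed.

Lemma amplitude_le_mor_cost_tgt (X Y : Ab) (g : Hom X Y) :
  alpha Y <= mor_cost alpha g + alpha X.
Proof.
apply: (le_trans (amplitude_le_cokerD g)).
by apply: leeD2r; apply: leeDr; apply: alpha_amp.1.
Qed.

Lemma amplitude_le_zz_cost (A B : Ab) (z : zigzag A B) :
  alpha A <= zz_cost alpha z + alpha B.
Proof.
elim: z => [X | A' Cm X B' g1 g2 r IH] /=; first by rewrite add0e.
suff: alpha A' <= mor_cost alpha g1 + (mor_cost alpha g2 + (zz_cost alpha r + alpha B')).
  by rewrite !addeA.
apply: le_trans (amplitude_le_mor_cost_tgt g1) (leeD2l _ _).
exact: le_trans (amplitude_le_mor_cost_src g2) (leeD2l _ IH).
Qed.

End AmplitudeCostBounds.

Theorem mainTheorem5 (R : realType) (Ab : AbelianCategory) (alpha : Ab -> \bar R) :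
  amplitude alpha ->
  forall A : Ab, alpha A = path_metric alpha A (zero_obj Ab).
Proof.
move=> alpha_amp A; have [alpha_ge0 [alpha0 _]] := alpha_amp.
apply/le_anti/andP; split.
  apply: le_ereal_inf_tmp => _ [z _ <-].
  by have := amplitude_le_zz_cost alpha_amp z; rewrite alpha0 adde0.
have [[z] _] := (zero_obj_is_zero A).1.
pose span := zz_cons z (idm (zero_obj Ab)) (zz_nil (zero_obj Ab)).
apply: le_trans (ereal_inf_lbound (x := zz_cost alpha span) _) _; first by exists span.
have from_zero Y (f : Hom (zero_obj Ab) Y) : alpha (ker f) = 0.
  by apply/le_anti; rewrite alpha_ge0 -alpha0 amplitude_ker_le.
have to_zero Y (f : Hom Y (zero_obj Ab)) : alpha (coker f) = 0.
  by apply/le_anti; rewrite alpha_ge0 -alpha0 amplitude_coker_le.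
rewrite /= /mor_cost !from_zero to_zero !add0e !adde0.
exact: amplitude_coker_le.
Qed.
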